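(* Let $\mathcal{S}$ be a set of sum indecomposable permutations that is downward closed among indecomposables (if $\sigma\in\mathcal{S}$, $\tau$ is a subpermutation of $\sigma$ and $\tau$ is indecomposable, then $\tau\in\mathcal{S}$), and suppose there is a constant $c$ with $1\leq|\mathcal{S}_n|\leq c$ for all $n\geq1$. Then the growth rate $\lim_{n\to\infty}|(\bigoplus\mathcal{S})_n|^{1/n}$ of the sum closure $\bigoplus\mathcal{S}$ exists and equals the unique real $\gamma>1$ satisfying $$\sum_{n=1}^\infty|\mathcal{S}_n|\,\gamma^{-n}=1.$$
   Context: A permutation of length $n$ is a sequence containing each element of $\{1,\dots,n\}$ exactly once; $\tau$ is a subpermutation of $\sigma$ if some subsequence of $\sigma$ has the same relative order as $\tau$. For a set of permutations $\mathcal{S}$, $\mathcal{S}_n$ is the set of its members of length $n$. The direct sum of $\sigma$ (length $k$) and $\tau$ (length $\ell$) is the permutation $\sigma\oplus\tau$ of length $k+\ell$ with $(\sigma\oplus\tau)(i)=\sigma(i)$ for $i\leq k$ and $(\sigma\oplus\tau)(i)=k+\tau(i-k)$ for $k<i\leq k+\ell$. A permutation is (sum) indecomposable if it is not the direct sum of two shorter permutations. The sum closure $\bigoplus\mathcal{S}$ is the set of all permutations $\sigma_1\oplus\cdots\oplus\sigma_r$ ($r\geq1$) with each $\sigma_i\in\mathcal{S}$. *)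

From HB Require Import structures.
From mathcomp Require Import all_boot all_order all_algebra all_fingroup.
From mathcomp Require Import all_classical all_reals all_analysis.
Set Implicit Arguments. Unset Strict Implicit. Unset Printing Implicit Defensive.
Import Order.TTheory GRing.Theory Num.Theory.

(* Permutations of length n are elements of 'S_n (permutations of 'I_n,
   i.e. of {0,...,n-1}; this is {1,...,n} shifted by one). *)

Definition dsum_fun k l (s : 'S_k) (t : 'S_l) (i : 'I_(k + l)) : 'I_(k + l) :=
  match fintype.split i with
  | inl a => lshift l (s a)
  | inr b => rshift k (t b)
  end.

Lemma dsum_fun_inj k l (s : 'S_k) (t : 'S_l) : injective (dsum_fun s t).
Proof.
move=> i j; rewrite /dsum_fun -[i]splitK -[j]splitK !unsplitK.
case: (fintype.split i) => a; case: (fintype.split j) => b /= /eqP;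
  rewrite /eq_op /= ?eqn_add2l.
- by move=> /eqP /val_inj /perm_inj ->.
- by move=> /eqP E; have := ltn_ord (s a); rewrite E -ltn_subRL subnn.
- by move=> /eqP E; have := ltn_ord (s b); rewrite -E -ltn_subRL subnn.
- by move=> /eqP /val_inj /perm_inj ->.
Qed.

Definition dsum k l (s : 'S_k) (t : 'S_l) : 'S_(k + l) :=
  perm (@dsum_fun_inj k l s t).

Definition indecomposable n (s : 'S_n) : Prop :=
  ~ exists k l (E : k + l = n) (s1 : 'S_k) (s2 : 'S_l),
      0 < k /\ 0 < l /\ s = cast_perm E (dsum s1 s2).

Definition subperm k n (t : 'S_k) (s : 'S_n) : Prop :=
  exists f : 'I_k -> 'I_n,
    (forall i j : 'I_k, i < j -> f i < f j) /\
    (forall i j : 'I_k, (t i < t j) = (s (f i) < s (f j))).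

Inductive sum_closure (S : forall n, {set 'S_n}) : forall n, 'S_n -> Prop :=
  | sc_one n (s : 'S_n) : s \in S n -> sum_closure S s
  | sc_cons k l (s : 'S_k) (t : 'S_l) :
      s \in S k -> sum_closure S t -> sum_closure S (dsum s t).

Definition sum_closure_n (S : forall n, {set 'S_n}) (n : nat) : {set 'S_n} :=
  [set s : 'S_n | `[< sum_closure S s >]].

From HB Require Import structures.
From mathcomp Require Import all_boot all_order all_algebra all_fingroup.
From mathcomp Require Import all_classical all_reals all_analysis.
From mathcomp Require Import ring lra.
Set Implicit Arguments. Unset Strict Implicit. Unset Printing Implicit Defensive.
Import Order.TTheory GRing.Theory Num.Theory numFieldNormedType.Exports.

(* Apart from the empty permutation, every member of the sum closure is
   uniquely [s (+) t] with [s] in [S] its first sum indecomposable summand and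
   [t] again in the closure.  Hence [a n = #|sum_closure_n S n|] satisfies
   [a 0 = 1] and [a n.+1 = \sum_(m < n.+1) s m.+1 * a (n - m)], where
   [s m = #|S m|].  Let [P x = \sum_m s m.+1 * x ^+ m.+1].  As [1 <= s m <= c],
   [P] is finite and increasing on [0, 1) with [P (1/(c+1)) <= 1 <= P (3/4)],
   so [P x0 = 1] for a unique [x0], and [gamma = 1/x0].  Then [a n * x0 ^+ n]
   is a renewal sequence with weights [s m.+1 * x0 ^+ m.+1] of total mass 1,
   hence at most 1; since these weights have geometrically small tails it is
   also bounded below by a positive constant.  So [a n] lies within constant
   factors of [gamma ^+ n], and [a n `^ n^-1] tends to [gamma]. *)

Section DirectSum.
Variables k l : nat.
Implicit Types (s : 'S_k) (t : 'S_l).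

Lemma dsum_lshift s t (i : 'I_k) : dsum s t (lshift l i) = lshift l (s i).
Proof. by rewrite /dsum permE /dsum_fun (unsplitK (inl i)). Qed.

Lemma dsum_rshift s t (i : 'I_l) : dsum s t (rshift k i) = rshift k (t i).
Proof. by rewrite /dsum permE /dsum_fun (unsplitK (inr i)). Qed.

Lemma dsum_inj s s' t t' : dsum s t = dsum s' t' -> s = s' /\ t = t'.
Proof.
move=> E; split; apply/permP => i.
  by have := dsum_lshift s t i; rewrite E dsum_lshift => /lshift_inj.
by have := dsum_rshift s t i; rewrite E dsum_rshift => /rshift_inj.
Qed.

Lemma dsum_ltn s t (i : 'I_(k + l)) : (dsum s t i < k)%N = (i < k)%N.
Proof.
rewrite -[i]splitK; case: (fintype.split i) => [a|b] /=.
  by rewrite dsum_lshift /= !ltn_ord.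
by rewrite dsum_rshift /= !ltnNge !leq_addr.
Qed.

End DirectSum.

Lemma dsum0l l (s : 'S_0) (t : 'S_l) : dsum s t = t :> 'S_l.
Proof.
apply/permP => i; apply: val_inj; have := congr1 val (dsum_rshift s t i).
by rewrite (_ : rshift 0 i = i) //; apply: val_inj.
Qed.

Lemma cast_dsum0r n (s : 'S_n) (t : 'S_0) : cast_perm (addn0 n) (dsum s t) = s.
Proof.
apply/permP => i; apply: val_inj; rewrite cast_permE /=.
have -> : cast_ord (esym (addn0 n)) i = lshift 0 i by apply: val_inj.
by rewrite dsum_lshift.
Qed.

(* [x] is a direct sum whose first summand has length [j] exactly when
   [stable_prefix x j] (for [0 < j < n]). *)
Definition stable_prefix n (x : 'S_n) (j : nat) : bool :=
  [forall i : 'I_n, (i < j)%N ==> (x i < j)%N].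

Lemma stable_prefix_geq n (x : 'S_n) j (i : 'I_n) :
  stable_prefix x j -> (j <= i)%N -> (j <= x i)%N.
Proof.
move=> /forallP x_stable j_le_i; rewrite leqNgt; apply/negP => xi_lt_j.
pose A := [set y : 'I_n | (y < j)%N].
have xA : x @: A = A.
  apply/eqP; rewrite eqEcard (card_imset _ (@perm_inj _ x)) leqnn andbT.
  by apply/fintype.subsetP => _ /imsetP[y + ->]; rewrite !inE; apply: implyP.
have : x i \in x @: A by rewrite xA inE.
by rewrite mem_imset ?inE ?ltnNge ?j_le_i //; apply: perm_inj.
Qed.

Lemma stable_prefix_not_indecomposable k (x : 'S_k) j :
  (0 < j < k)%N -> stable_prefix x j -> ~ indecomposable x.
Proof.
move=> /andP[j_gt0 j_lt_k] x_stable; apply; have j_le_k := ltnW j_lt_k.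
have low i : (x (widen_ord j_le_k i) < j)%N.
  exact: (implyP (forallP x_stable (widen_ord j_le_k i)) (ltn_ord i)).
have low_inj : injective (fun i : 'I_j => Ordinal (low i)).
  by move=> a b [] /val_inj /perm_inj /(congr1 val) /= ab; apply: val_inj.
have shift_lt (i : 'I_(k - j)) : (j + i < k)%N by rewrite -ltn_subRL.
have high_geq (i : 'I_(k - j)) : (j <= x (Ordinal (shift_lt i)))%N.
  by apply: stable_prefix_geq; rewrite //= leq_addr.
have high i : (x (Ordinal (shift_lt i)) - j < k - j)%N.
  by rewrite ltn_sub2r.
have high_inj : injective (fun i : 'I_(k - j) => Ordinal (high i)).
  move=> a b [] /(congr1 (addn j)); rewrite !subnKC ?high_geq //.
  by move=> /val_inj /perm_inj [] /eqP; rewrite eqn_add2l => /eqP /val_inj.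
exists j, (k - j), (subnKC j_le_k), (perm low_inj), (perm high_inj).
split=> //; split; first by rewrite subn_gt0.
apply/permP => i; apply: val_inj; rewrite cast_permE /=.
case: (splitP (cast_ord (esym (subnKC j_le_k)) i)) => [a Ha | b Hb].
  have -> : cast_ord (esym (subnKC j_le_k)) i = lshift (k - j) a by apply: val_inj.
  by rewrite dsum_lshift /= permE /=; congr (val (x _)); apply: val_inj.
have -> : cast_ord (esym (subnKC j_le_k)) i = rshift j b by apply: val_inj.
rewrite dsum_rshift /= permE /= subnKC ?high_geq //.
by congr (val (x _)); apply: val_inj.
Qed.

Section CastDsum.
Variables (k l n : nat) (E : (k + l)%N = n) (s : 'S_k) (t : 'S_l).

Lemma stable_prefix_cast_dsum : stable_prefix (cast_perm E (dsum s t)) k.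
Proof. by apply/forallP => i; apply/implyP; rewrite cast_permE /= dsum_ltn. Qed.

Lemma stable_prefix_cast_dsum_left j :
  stable_prefix (cast_perm E (dsum s t)) j -> stable_prefix s j.
Proof.
move=> /forallP st; apply/forallP => a; apply/implyP => a_lt_j.
have := implyP (st (cast_ord E (lshift l a))) a_lt_j.
by rewrite cast_permE cast_ordK dsum_lshift.
Qed.

End CastDsum.

Lemma find_iota0 (p : pred nat) n i :
  (i < n)%N -> p i -> (forall j, (j < i)%N -> ~~ p j) -> find p (iota 0 n) = i.
Proof.
move=> i_lt_n pi before_i.
have -> : n = (i + (n - i).-1.+1)%N by rewrite prednK ?subnKC ?subn_gt0 // ltnW.
rewrite iotaD find_cat size_iota /= add0n pi addn0.
have -> // : has p (iota 0 i) = false.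
by apply/hasP => -[j]; rewrite mem_iota add0n => /before_i /negbTE ->.
Qed.

(* The least [j > 0] with [stable_prefix x j], i.e. the length of the first
   sum indecomposable summand of [x]. *)
Definition first_block n (x : 'S_n) : nat :=
  (find (fun j => stable_prefix x j.+1) (iota 0 n)).+1.

Lemma first_block_cast_dsum k l n (E : (k + l)%N = n) (s : 'S_k) (t : 'S_l) :
  (0 < k)%N -> indecomposable s -> first_block (cast_perm E (dsum s t)) = k.
Proof.
move=> k_gt0 s_indec; rewrite /first_block (@find_iota0 _ _ k.-1) ?prednK //.
- by rewrite -E leq_addr.
- exact: stable_prefix_cast_dsum.
move=> j j_lt; apply/negP => /stable_prefix_cast_dsum_left s_stable.
by apply: stable_prefix_not_indecomposable s_stable s_indec; rewrite /= -(prednK k_gt0).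
Qed.

Lemma first_block_leq n (x : 'S_n.+1) : (first_block x <= n.+1)%N.
Proof.
rewrite /first_block -[n.+1 in X in (_ < X)%N](size_iota 0) -has_find.
apply/hasP; exists n; first by rewrite mem_iota add0n ltnSn.
by apply/forallP => i; rewrite !ltn_ord.
Qed.

(* The empty permutation is vacuously indecomposable, so any nonempty
   hereditary family contains it. *)
Lemma mem_perm0 (S : forall n, {set 'S_n}) :
  (forall n k (s : 'S_n) (t : 'S_k),
      s \in S n -> subperm t s -> indecomposable t -> t \in S k) ->
  (0 < #|S 1|)%N -> forall x : 'S_0, x \in S 0.
Proof.
move=> hered /card_gt0P[s sS] x; apply: (hered 1%N 0%N s x sS).
  by exists (fun => ord0); split=> -[].
by move=> [k [l [E [_ [_ [k_gt0 _]]]]]]; move: E; case: k k_gt0.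
Qed.

Section SumClosure.
Variable S : forall n, {set 'S_n}.
Hypothesis S_indec : forall n (s : 'S_n), s \in S n -> indecomposable s.
Hypothesis S0 : forall x : 'S_0, x \in S 0.

Lemma sum_closure_cast m n (E : m = n) (x : 'S_m) :
  sum_closure S x -> sum_closure S (cast_perm E x).
Proof. by case: n / E; rewrite cast_perm_id. Qed.

Lemma sum_closure_split n (x : 'S_n) : sum_closure S x -> n = 0%N \/
  exists k l (E : (k + l)%N = n) (s : 'S_k) (t : 'S_l),
    [/\ (0 < k)%N, s \in S k, sum_closure S t & x = cast_perm E (dsum s t)].
Proof.
elim=> [[|m] s sS | [|k] l s t sS tS IH]; first by left.
- right; exists m.+1, 0%N, (addn0 m.+1), s, 1%g.
  by rewrite cast_dsum0r; split=> //; apply: sc_one.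
- case: IH => [l0|[k' [l' [E [s' [t' [k'_gt0 s'S t'S t_eq]]]]]]].
    by left; rewrite l0.
  by right; exists k', l', E, s', t'; rewrite dsum0l; split.
- by right; exists k.+1, l, erefl, s, t; rewrite cast_perm_id; split.
Qed.

Lemma sum_closure_first_block k l n (E : (k + l)%N = n) : (0 < k)%N ->
  [set x in sum_closure_n S n | first_block x == k] =
  [set cast_perm E (dsum p.1 p.2) | p in finset.setX (S k) (sum_closure_n S l)].
Proof.
move=> k_gt0; apply/setP => x; rewrite !inE; apply/andP/imsetP.
- case=> /asboolP /sum_closure_split[n0|[k' [l' [E' [s [t [k'_gt0 sS tS ->]]]]]]].
    by exfalso; move: E k_gt0; rewrite n0; case: k.
  rewrite (first_block_cast_dsum _ _ k'_gt0 (S_indec sS)) => /eqP k'k; subst k'.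
  have l'l : l' = l by apply/eqP; rewrite -(eqn_add2l k) E E'.
  subst l'; exists (s, t); last by rewrite (eq_irrelevance E E').
  by rewrite !inE sS; apply/asboolP.
- move=> [[s t]]; rewrite !inE => /andP[sS /asboolP tS] ->.
  split; last by rewrite (first_block_cast_dsum _ _ k_gt0 (S_indec sS)).
  exact (sum_closure_cast E (sc_cons sS tS)).
Qed.

Lemma card_sum_closure_first_block k l n (E : (k + l)%N = n) : (0 < k)%N ->
  #|[set x in sum_closure_n S n | first_block x == k]| =
  (#|S k| * #|sum_closure_n S l|)%N.
Proof.
move=> k_gt0; rewrite (sum_closure_first_block E k_gt0) card_in_imset ?cardsX //.
by move=> [s t] [s' t'] _ _ /= /cast_perm_inj /dsum_inj [-> ->].
Qed.

Lemma card_sum_closure0 : #|sum_closure_n S 0| = 1%N.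
Proof.
apply/eqP/cards1P; exists 1%g; apply/setP => x; rewrite !inE.
have -> : x = 1%g by apply/permP => -[].
by rewrite eqxx; apply/asboolP; apply: sc_one.
Qed.

Lemma card_sum_closureS n :
  #|sum_closure_n S n.+1| =
  (\sum_(m < n.+1) #|S m.+1| * #|sum_closure_n S (n - m)|)%N.
Proof.
pose block (x : 'S_n.+1) : 'I_n.+1 := inord (first_block x).-1.
have blockE x m : (block x == m) = (first_block x == m.+1).
  by rewrite -val_eqE /= inordK //; apply: first_block_leq.
rewrite -sum1_card (partition_big block predT) //=; apply: eq_bigr => m _.
have E : (m.+1 + (n - m))%N = n.+1 by rewrite addSn subnKC // -ltnS.
rewrite sum1dep_card -(card_sum_closure_first_block E) //.
by apply: eq_card => x; rewrite !inE blockE.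
Qed.

End SumClosure.

Local Open Scope classical_set_scope.
Local Open Scope ring_scope.

Section Estimates.
Variable R : realFieldType.

Lemma geometric_sum_le (x : R) N : 0 <= x < 1 ->
  \sum_(m < N) x ^+ m.+1 <= x / (1 - x).
Proof.
case/andP => x_ge0 x_lt1; have x1 : 0 < 1 - x by rewrite subr_gt0.
have telescope : (1 - x) * \sum_(m < N) x ^+ m.+1 = x - x ^+ N.+1.
  elim: N => [|N IH]; first by rewrite big_ord0 mulr0 expr1 subrr.
  rewrite big_ord_recr mulrDr IH (exprS x N.+1); set y := x ^+ N.+1; ring.
by rewrite ler_pdivlMr // mulrC telescope gerBl exprn_ge0.
Qed.

Lemma exprn_lipschitz (x y r : R) m : 0 <= x <= r -> 0 <= y <= r ->
  `|x ^+ m.+1 - y ^+ m.+1| <= m.+1%:R * r ^+ m * `|x - y|.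
Proof.
move=> /andP[x_ge0 x_le] /andP[y_ge0 y_le]; have r_ge0 := le_trans x_ge0 x_le.
elim: m => [|m IH]; first by rewrite !expr1 expr0 mulr1 mul1r.
have -> : x ^+ m.+2 - y ^+ m.+2 = x * (x ^+ m.+1 - y ^+ m.+1) + (x - y) * y ^+ m.+1.
  by rewrite (exprS x m.+1) (exprS y m.+1); ring.
apply: (le_trans (ler_normD _ _)); rewrite !normrM.
have h1 : `|x| * `|x ^+ m.+1 - y ^+ m.+1| <= r * (m.+1%:R * r ^+ m * `|x - y|).
  by apply: ler_pM => //; rewrite ger0_norm.
have h2 : `|x - y| * `|y ^+ m.+1| <= `|x - y| * r ^+ m.+1.
  by rewrite ler_wpM2l // ger0_norm ?exprn_ge0 // lerXn2r // nnegrE.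
apply: le_trans (lerD h1 h2) _; rewrite (exprS r m) -[m.+2%:R]natr1; lra.
Qed.

Lemma weighted_geometric_sum_le (r : R) N : 0 <= r < 1 ->
  \sum_(m < N) m.+1%:R * r ^+ m <= ((1 - r) ^+ 2)^-1.
Proof.
case/andP => r_ge0 r_lt1; have r1 : 0 < (1 - r) ^+ 2 by rewrite exprn_gt0 // subr_gt0.
have closed_form : (1 - r) ^+ 2 * \sum_(m < N) m.+1%:R * r ^+ m =
    1 - N.+1%:R * r ^+ N + N%:R * r ^+ N.+1.
  elim: N => [|N IH]; first by rewrite big_ord0 mulr0 expr0 mul1r mul0r addr0 subrr.
  rewrite big_ord_recr /= mulrDr IH (exprS r N.+1) (exprS r N).
  rewrite -[N.+2%:R]natr1 -[N.+1%:R]natr1; set u := r ^+ N; ring.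
rewrite -(ler_pM2l r1) mulrV ?unitfE ?gt_eqF // closed_form.
have rN_ge0 : 0 <= r ^+ N := exprn_ge0 N r_ge0.
have : N%:R * r ^+ N.+1 <= N%:R * r ^+ N.
  by rewrite ler_wpM2l // exprS ler_piMl // ltW.
rewrite -natr1; lra.
Qed.

Definition clamp (r x : R) : R := Num.min (Num.max x 0) r.

Lemma clamp_cases (r x : R) : 0 <= r ->
  [\/ x <= 0 /\ clamp r x = 0, 0 <= x <= r /\ clamp r x = x
    | r <= x /\ clamp r x = r].
Proof.
move=> r_ge0; rewrite /clamp; have [x_le0|x_gt0] := leP x 0.
  by constructor 1; rewrite min_l.
have [x_le|x_gt] := leP x r; last by constructor 3; split; [apply: ltW|].
by constructor 2; rewrite ltW.
Qed.

Lemma clamp_id (r x : R) : 0 <= x <= r -> clamp r x = x.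
Proof.
move=> /andP[x_ge0 x_le]; have r_ge0 := le_trans x_ge0 x_le.
by case: (clamp_cases x r_ge0) => [[? ->]|[_ ->]|[? ->]] //; apply/eqP; rewrite eq_le; lra.
Qed.

Lemma clamp_itv (r x : R) : 0 <= r -> 0 <= clamp r x <= r.
Proof. by move=> r_ge0; case: (clamp_cases x r_ge0) => [[_ ->]|[? ->]|[_ ->]]; lra. Qed.

Lemma clamp_lipschitz (r x y : R) : 0 <= r -> `|clamp r x - clamp r y| <= `|x - y|.
Proof.
move=> r_ge0; have xy := ler_norm (x - y); have yx := ler_norm (y - x).
rewrite distrC in yx; rewrite ler_norml.
by case: (clamp_cases x r_ge0) => [[hx ->]|[/andP[hx hx'] ->]|[hx ->]];
  case: (clamp_cases y r_ge0) => [[hy ->]|[/andP[hy hy'] ->]|[hy ->]]; lra.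
Qed.

Lemma lipschitz_continuous (f : R -> R) (K : R) : 0 <= K ->
  (forall x y, `|f x - f y| <= K * `|x - y|) -> continuous f.
Proof.
move=> K_ge0 f_lip x; apply/cvgrPdist_lt => e e_gt0; apply/nbhs_normP.
have K1 : 0 < K + 1 by lra.
exists (e / (K + 1)); first by rewrite /= divr_gt0.
move=> y /= xy; apply: le_lt_trans (f_lip x y) _.
apply: (@le_lt_trans _ _ (K * (e / (K + 1)))); first by rewrite ler_wpM2l // ltW.
by rewrite mulrA ltr_pdivrMr // mulrDr mulr1; lra.
Qed.

Section Renewal.
Variables w b : nat -> R.
Hypothesis w_ge0 : forall m, 0 <= w m.
Hypothesis w_sum_le1 : forall N, \sum_(m < N) w m <= 1.
Hypothesis bS : forall n, b n.+1 = \sum_(m < n.+1) w m * b (n - m)%N.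

Lemma renewal_le1 : b 0 <= 1 -> forall n, b n <= 1.
Proof.
move=> b0; elim/ltn_ind => -[|n] IH //; rewrite bS.
apply: le_trans (w_sum_le1 n.+1); apply: ler_sum => m _.
by rewrite ler_piMr // IH // ltnS leq_subr.
Qed.

(* Each step beyond [K] costs the lower bound a factor [1 - tail], where
   [tail = 1 - \sum_(m < N) w m], and a product of such factors dominates
   [1 - \sum tails]. *)
Lemma renewal_lower beta K : 0 <= beta -> (forall j, (j <= K)%N -> beta <= b j) ->
  forall i j, (j <= K + i)%N ->
  beta * (1 - \sum_(k < i) (1 - \sum_(m < (K + k).+1) w m)) <= b j.
Proof.
move=> beta_ge0 b_init; elim=> [|i IH] j j_le.
  by rewrite big_ord0 subr0 mulr1; apply: b_init; rewrite addn0 in j_le.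
rewrite big_ord_recr /=.
set D := \sum_(k < i) _; set T := 1 - \sum_(m < (K + i).+1) w m.
have T_ge0 : 0 <= T by rewrite subr_ge0 w_sum_le1.
have D_ge0 : 0 <= D by apply: sumr_ge0 => k _; rewrite subr_ge0 w_sum_le1.
have loss : 0 <= beta * D * T by rewrite !mulr_ge0.
have [j_le'|j_gt] := leqP j (K + i).
  by have := IH j j_le'; rewrite -/D; have := mulr_ge0 beta_ge0 T_ge0; lra.
have -> : j = (K + i).+1 by apply/eqP; rewrite eqn_leq j_gt -addnS j_le.
rewrite bS; apply: le_trans (_ : \sum_(m < (K + i).+1) w m * (beta * (1 - D)) <= _).
  rewrite -mulr_suml; have -> : \sum_(m < (K + i).+1) w m = 1 - T by rewrite /T; ring.
  nra.
by apply: ler_sum => m _; rewrite ler_wpM2l // IH // leq_subr.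
Qed.

Lemma renewal_ge beta K : 0 <= beta -> (forall j, (j <= K)%N -> beta <= b j) ->
  (forall i, \sum_(k < i) (1 - \sum_(m < (K + k).+1) w m) <= 1 / 2) ->
  forall n, beta / 2 <= b n.
Proof.
move=> beta_ge0 b_init small n.
apply: le_trans (renewal_lower beta_ge0 b_init (leq_addl K n)).
by have := small n; nra.
Qed.

End Renewal.
End Estimates.

Section GeneratingFunction.
Variables (R : realType) (s : nat -> nat) (c : nat).
Hypothesis s_le : forall n, (0 < n)%N -> (s n <= c)%N.
Hypothesis s_ge1 : forall n, (0 < n)%N -> (1 <= s n)%N.

Let c_gt0 : (0 < c)%N := leq_trans (s_ge1 (ltn0Sn 0)) (s_le (ltn0Sn 0)).

Definition pser (x : R) N : R := \sum_(m < N) (s m.+1)%:R * x ^+ m.+1.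

Lemma series_pser (g : R) :
  series (fun n => (s n.+1)%:R * g ^- n.+1) = pser g^-1.
Proof.
by apply/funext => N; rewrite seriesEord; apply: eq_bigr => m _; rewrite exprVn.
Qed.

Lemma pserS (x : R) N : pser x N.+1 = pser x N + (s N.+1)%:R * x ^+ N.+1.
Proof. by rewrite /pser big_ord_recr. Qed.

Lemma pser_nondecreasing (x : R) : 0 <= x -> nondecreasing_seq (pser x).
Proof.
move=> x_ge0; apply/nondecreasing_seqP => n.
by rewrite pserS lerDl mulr_ge0 ?exprn_ge0.
Qed.

Lemma pser_le (x : R) N : 0 <= x < 1 -> pser x N <= c%:R * (x / (1 - x)).
Proof.
move=> x_itv; have x_ge0 : 0 <= x by case/andP: x_itv.
apply: le_trans (_ : c%:R * \sum_(m < N) x ^+ m.+1 <= _); last first.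
  by rewrite ler_wpM2l ?geometric_sum_le.
rewrite mulr_sumr; apply: ler_sum => m _.
by rewrite ler_wpM2r ?exprn_ge0 // ler_nat s_le.
Qed.

Lemma pser_cvg (x : R) : 0 <= x < 1 -> cvgn (pser x).
Proof.
move=> x_itv; apply: nondecreasing_is_cvgn.
  by apply: pser_nondecreasing; case/andP: x_itv.
by exists (c%:R * (x / (1 - x))) => _ [N _ <-]; apply: pser_le.
Qed.

Lemma pser_lipschitz (r x y : R) N : r < 1 -> 0 <= x <= r -> 0 <= y <= r ->
  `|pser x N - pser y N| <= c%:R / (1 - r) ^+ 2 * `|x - y|.
Proof.
move=> r_lt1 x_itv y_itv; have r_ge0 : 0 <= r by case/andP: x_itv => /le_trans; apply.
rewrite /pser -sumrB; apply: le_trans (ler_norm_sum _ _ _) _.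
apply: le_trans (_ : \sum_(m < N) c%:R * `|x - y| * (m.+1%:R * r ^+ m) <= _).
  apply: ler_sum => m _; rewrite -mulrBr normrM ger0_norm // -mulrA.
  apply: ler_pM; rewrite ?normr_ge0 ?ler_nat ?s_le //.
  by rewrite mulrC; apply: exprn_lipschitz.
rewrite -mulr_sumr [leRHS]mulrAC ler_wpM2l ?mulr_ge0 //.
by apply: weighted_geometric_sum_le; rewrite r_ge0.
Qed.

Definition pser_lim (x : R) : R := limn (pser x).

Lemma pser_lim_lipschitz (r x y : R) : r < 1 -> 0 <= x <= r -> 0 <= y <= r ->
  `|pser_lim x - pser_lim y| <= c%:R / (1 - r) ^+ 2 * `|x - y|.
Proof.
move=> r_lt1 x_itv y_itv.
have itv z : 0 <= z <= r -> 0 <= z < 1 by case/andP=> z_ge0 z_le; rewrite z_ge0 (le_lt_trans z_le).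
have lim_diff : (fun N => pser x N - pser y N) @ \oo --> pser_lim x - pser_lim y.
  by apply: cvgB; apply: pser_cvg; apply: itv.
have bound N : - (c%:R / (1 - r) ^+ 2 * `|x - y|) <= pser x N - pser y N <=
    c%:R / (1 - r) ^+ 2 * `|x - y|.
  by rewrite -ler_norml; apply: pser_lipschitz.
rewrite ler_norml; apply/andP; split.
  by apply: (cvgr_to_ge lim_diff); apply: nearW => N; case/andP: (bound N).
by apply: (cvgr_to_le lim_diff); apply: nearW => N; case/andP: (bound N).
Qed.

Lemma pser_lim_at_inv_le1 : pser_lim (c%:R + 1)^-1 <= 1.
Proof.
have c_ge1 : 1 <= c%:R :> R by rewrite (ler_nat R 1) c_gt0.
set x := (c%:R + 1)^-1.
have x_itv : 0 <= x < 1 by rewrite invr_ge0 invf_lt1; lra.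
have bound1 : c%:R * (x / (1 - x)) = 1 by rewrite /x; field; lra.
apply: (cvgr_to_le (pser_cvg x_itv)); apply: nearW => N.
by have := pser_le N x_itv; rewrite bound1.
Qed.

Lemma pser_lim_at_3_4_ge1 : 1 <= pser_lim (3 / 4).
Proof.
have x_itv : 0 <= (3 / 4 : R) < 1 by lra.
apply: le_trans (nondecreasing_cvgn_le (pser_nondecreasing _) (pser_cvg x_itv) 2); last lra.
rewrite !pserS /pser big_ord0 add0r expr1 expr2.
have s1 : 1 <= (s 1)%:R :> R by rewrite (ler_nat R 1) s_ge1.
have s2 : 1 <= (s 2)%:R :> R by rewrite (ler_nat R 1) s_ge1.
nra.
Qed.

Lemma pser_root_exists : exists2 x0 : R, 0 < x0 <= 3 / 4 & pser x0 @ \oo --> (1 : R).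
Proof.
have r_itv : 0 <= (3 / 4 : R) < 1 by lra.
have c_ge1 : 1 <= c%:R :> R by rewrite (ler_nat R 1) c_gt0.
(* Clamping makes the limit function globally Lipschitz, hence continuous. *)
pose f x := pser_lim (clamp (3 / 4) x).
have f_cont : continuous f.
  case/andP: r_itv => r_ge0 r_lt1.
  have K_ge0 : 0 <= c%:R / (1 - 3 / 4) ^+ 2 :> R by rewrite divr_ge0 ?exprn_ge0 //; lra.
  apply: (lipschitz_continuous K_ge0) => x y.
  apply: le_trans (pser_lim_lipschitz r_lt1 (clamp_itv x r_ge0) (clamp_itv y r_ge0)) _.
  by rewrite ler_wpM2l ?clamp_lipschitz.
set lo : R := (c%:R + 1)^-1.
have lo_gt0 : 0 < lo by rewrite invr_gt0; lra.
have lo_le : lo <= 3 / 4 by rewrite /lo -div1r ler_pdivrMr; lra.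
have f_lo : f lo <= 1 by rewrite /f clamp_id ?pser_lim_at_inv_le1 // (ltW lo_gt0) lo_le.
have f_hi : 1 <= f (3 / 4) by rewrite /f clamp_id ?pser_lim_at_3_4_ge1 //; lra.
have [x0 + f_x0] : exists2 x0, x0 \in `[lo, 3 / 4] & f x0 = 1.
  apply: IVT lo_le (continuous_subspaceT f_cont) _.
  by rewrite ge_min le_max f_lo f_hi orbT.
rewrite in_itv /= => /andP[lo_le_x0 x0_le].
have x0_itv : 0 <= x0 <= 3 / 4 by rewrite x0_le (le_trans (ltW lo_gt0)).
exists x0; first by rewrite x0_le (lt_le_trans lo_gt0).
rewrite -f_x0 /f clamp_id //; apply: pser_cvg; lra.
Qed.

Lemma pser_sub_ge (y z : R) N : 0 <= y <= z -> (0 < N)%N ->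
  z - y <= pser z N - pser y N.
Proof.
case/andP=> y_ge0 y_le_z; case: N => // N _; elim: N => [|N IH].
  rewrite !pserS /pser !big_ord0 !add0r !expr1 -mulrBr.
  by rewrite ler_peMl ?subr_ge0 // (ler_nat R 1) s_ge1.
rewrite pserS [pser y _]pserS.
have : (s N.+2)%:R * y ^+ N.+2 <= (s N.+2)%:R * z ^+ N.+2.
  by rewrite ler_wpM2l // lerXn2r // nnegrE (le_trans y_ge0).
lra.
Qed.

Lemma pser_root_unique (x y : R) : 0 <= x -> 0 <= y ->
  pser x @ \oo --> (1 : R) -> pser y @ \oo --> (1 : R) -> x = y.
Proof.
wlog x_le_y : x y / x <= y.
  move=> main x_ge0 y_ge0 px py; have [xy|/ltW yx] := leP x y; first exact: main.
  exact/esym/main.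
move=> x_ge0 _ px py; apply/eqP; rewrite eq_le x_le_y /=.
have lim_diff : (fun N => pser y N - pser x N) @ \oo --> (1 - 1 : R) by apply: cvgB.
have : y - x <= 1 - 1.
  by apply: (cvgr_to_ge lim_diff); exists 1%N => // N /= N_gt0; apply: pser_sub_ge; rewrite ?x_ge0.
lra.
Qed.

Section Root.
Variable x0 : R.
Hypotheses (x0_gt0 : 0 < x0) (x0_lt1 : x0 < 1) (pser_x0 : pser x0 @ \oo --> (1 : R)).

Lemma pser_root_le1 N : pser x0 N <= 1.
Proof.
apply: (cvgr_to_ge pser_x0); exists N => // n /= N_le_n.
exact: pser_nondecreasing (ltW x0_gt0) _ _ N_le_n.
Qed.

Lemma pser_root_tail_le N : 1 - pser x0 N <= c%:R * (x0 / (1 - x0)) * x0 ^+ N.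
Proof.
have x0_ge0 := ltW x0_gt0.
have partial k :
    pser x0 (N + k) <= pser x0 N + c%:R * x0 ^+ N * \sum_(j < k) x0 ^+ j.+1.
  elim: k => [|k IH]; first by rewrite addn0 big_ord0 mulr0 addr0.
  rewrite addnS pserS big_ord_recr /= mulrDr.
  have : (s (N + k).+1)%:R * x0 ^+ (N + k).+1 <= c%:R * x0 ^+ N * x0 ^+ k.+1.
    by rewrite -mulrA -exprD addnS ler_wpM2r ?exprn_ge0 // ler_nat s_le.
  lra.
suff : 1 <= pser x0 N + c%:R * (x0 / (1 - x0)) * x0 ^+ N by lra.
apply: (cvgr_to_le pser_x0); exists N => // n /= N_le_n.
rewrite -(subnKC N_le_n); apply: le_trans (partial _) _.
rewrite lerD2l [leRHS]mulrAC ler_wpM2l ?mulr_ge0 ?exprn_ge0 //.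
by apply: geometric_sum_le; rewrite x0_ge0.
Qed.

Lemma pser_root_tails_small :
  exists K, forall i, \sum_(k < i) (1 - pser x0 (K + k).+1) <= 1 / 2.
Proof.
have x0_ge0 := ltW x0_gt0.
set q := x0 / (1 - x0); set C := c%:R * q.
have q_ge0 : 0 <= q by rewrite divr_ge0 // subr_ge0 ltW.
have C_ge0 : 0 <= C by rewrite mulr_ge0.
have Cq_ge0 : 0 <= C * q := mulr_ge0 C_ge0 q_ge0.
have x0n_cvg0 : (fun n => x0 ^+ n) @ \oo --> (0 : R).
  by apply: cvg_expr; rewrite ger0_norm.
have eps_gt0 : 0 < (2 * (C * q) + 1)^-1 by rewrite invr_gt0; lra.
have [K _ x0K] := cvgr_lt _ x0n_cvg0 _ eps_gt0.
have := x0K K (leqnn K); rewrite /= -div1r ltr_pdivlMr; last lra.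
move=> small; exists K => i.
apply: le_trans (_ : C * q * x0 ^+ K <= _); last by have := exprn_ge0 K x0_ge0; nra.
apply: le_trans (_ : \sum_(k < i) C * x0 ^+ K * x0 ^+ k.+1 <= _).
  apply: ler_sum => k _; apply: le_trans (pser_root_tail_le _) _.
  by rewrite -/q -/C -mulrA -exprD addnS.
rewrite -mulr_sumr [leRHS]mulrAC; apply: ler_wpM2l.
  by rewrite mulr_ge0 ?exprn_ge0.
by apply: geometric_sum_le; rewrite x0_ge0.
Qed.

Lemma pser_root_renewal (a : nat -> nat) : a 0 = 1%N ->
  (forall n, a n.+1 = \sum_(m < n.+1) s m.+1 * a (n - m))%N ->
  exists2 d : R, 0 < d & forall n, d * x0^-1 ^+ n <= (a n)%:R <= x0^-1 ^+ n.
Proof.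
move=> a0 aS; have x0_ge0 := ltW x0_gt0.
pose w m := (s m.+1)%:R * x0 ^+ m.+1.
pose b n := (a n)%:R * x0 ^+ n.
have w_ge0 m : 0 <= w m by rewrite mulr_ge0 ?exprn_ge0.
have w_sum_le1 N : \sum_(m < N) w m <= 1 by apply: pser_root_le1.
have bS n : b n.+1 = \sum_(m < n.+1) w m * b (n - m)%N.
  rewrite /b aS natr_sum mulr_suml; apply: eq_bigr => m _.
  have -> : x0 ^+ n.+1 = x0 ^+ m.+1 * x0 ^+ (n - m).
    by rewrite -exprD addSn subnKC // -ltnS.
  by rewrite /w natrM; ring.
have a_ge1 n : (1 <= a n)%N.
  elim: n => [|n IH]; first by rewrite a0.
  rewrite aS big_ord_recl subn0; apply: leq_trans (leq_addr _ _).
  by apply: leq_trans IH _; apply: leq_pmull; apply: s_ge1.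
have [K small] := pser_root_tails_small.
have b_init j : (j <= K)%N -> x0 ^+ K <= b j.
  move=> j_le_K; apply: (@le_trans _ _ (x0 ^+ j)).
    by rewrite ler_wiXn2l // ltW.
  by rewrite ler_peMl ?exprn_ge0 // (ler_nat R 1) a_ge1.
have b_lo := renewal_ge w_ge0 w_sum_le1 bS (exprn_ge0 K x0_ge0) b_init small.
have b_hi : forall n, b n <= 1.
  by apply: renewal_le1 w_ge0 w_sum_le1 bS _; rewrite /b a0 expr0 mulr1.
exists (x0 ^+ K / 2); first by rewrite divr_gt0 ?exprn_gt0.
move=> n; have -> : (a n)%:R = b n * x0^-1 ^+ n.
  by rewrite /b exprVn mulfK // expf_neq0 // gt_eqF.
have g_ge0 : 0 <= x0^-1 ^+ n by rewrite exprn_ge0 // invr_ge0.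
by rewrite ler_wpM2r ?b_lo //= ler_piMl ?b_hi.
Qed.

End Root.

End GeneratingFunction.

Lemma powR_invn_cvg1 (R : realType) (d : R) : 0 < d ->
  (fun n : nat => d `^ n%:R^-1) @ \oo --> (1 : R).
Proof.
move=> d_gt0; rewrite -cvg_shiftS /=.
have exponent : (fun n => harmonic n * ln d) @ \oo --> 0 * ln d.
  by apply: cvgM; [apply: cvg_harmonic | apply: cvg_cst].
have := cvg_comp _ _ exponent (@continuous_expR R _); rewrite mul0r expR0.
apply: cvg_trans; apply: near_eq_cvg; apply: nearW => n /=.
by rewrite /powR gt_eqF.
Qed.

Lemma cvg_powR_invn (R : realType) (a : nat -> R) (g d : R) : 0 < g -> 0 < d ->
  (forall n, d * g ^+ n <= a n <= g ^+ n) ->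
  (fun n => a n `^ n%:R^-1) @ \oo --> g.
Proof.
move=> g_gt0 d_gt0 bounds; have g_ge0 := ltW g_gt0.
have root n : (0 < n)%N -> (g ^+ n) `^ n%:R^-1 = g.
  move=> n_gt0; rewrite -powR_mulrn // -powRrM mulfV ?powRr1 //.
  by rewrite pnatr_eq0 -lt0n.
have lower : (fun n : nat => d `^ n%:R^-1 * g) @ \oo --> g.
  by rewrite -[X in _ --> X]mul1r; apply: cvgM; [apply: powR_invn_cvg1 | apply: cvg_cst].
apply: (squeeze_cvgr _ lower (cvg_cst g)); exists 1%N => // n /= n_gt0.
have /andP[lo hi] := bounds n; have r_ge0 : 0 <= n%:R^-1 :> R by rewrite invr_ge0.
have dg_ge0 : 0 <= d * g ^+ n := mulr_ge0 (ltW d_gt0) (exprn_ge0 n g_ge0).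
have an_ge0 : 0 <= a n := le_trans dg_ge0 lo.
rewrite -(root n n_gt0) -powRM ?exprn_ge0 ?(ltW d_gt0) //.
by apply/andP; split; apply: ge0_ler_powR; rewrite ?nnegrE ?exprn_ge0.
Qed.

Theorem lemma3p1 (R : realType) (S : forall n, {set 'S_n}) :
  (forall n (s : 'S_n), s \in S n -> indecomposable s) ->
  (forall n k (s : 'S_n) (t : 'S_k),
      s \in S n -> subperm t s -> indecomposable t -> t \in S k) ->
  (exists c : nat, forall n, (0 < n)%N -> (1 <= #|S n| <= c)%N) ->
  exists gamma : R,
    [/\ 1 < gamma,
        series (fun n => #|S n.+1|%:R * gamma ^- n.+1) @ \oo --> (1 : R),
        (forall g : R, 1 < g ->
           series (fun n => #|S n.+1|%:R * g ^- n.+1) @ \oo --> (1 : R) -> g = gamma)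
      & (fun n => (#|sum_closure_n S n|%:R : R) `^ (n%:R^-1)) @ \oo --> gamma].
Proof.
move=> S_indec hered [c S_card].
pose s n := #|S n|.
have s_le n : (0 < n)%N -> (s n <= c)%N by move/S_card/andP=> [].
have s_ge1 n : (0 < n)%N -> (1 <= s n)%N by move/S_card/andP=> [].
have S0 := mem_perm0 hered (s_ge1 1%N isT).
have [x0 /andP[x0_gt0 x0_le] pser_x0] := pser_root_exists R s_le s_ge1.
have x0_lt1 : x0 < 1 by lra.
exists x0^-1; split.
- by rewrite invf_gt1.
- by rewrite (series_pser s) invrK.
- move=> g g_gt1; rewrite (series_pser s) => pser_g.
  rewrite -[g]invrK -(pser_root_unique s_ge1 (ltW x0_gt0) _ pser_x0 pser_g) //.
  by rewrite invr_ge0 (le_trans ler01 (ltW g_gt1)).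
- have [d d_gt0 bounds] := pser_root_renewal s_le s_ge1 x0_gt0 x0_lt1 pser_x0
    (a := fun n => #|sum_closure_n S n|) (card_sum_closure0 S0)
    (card_sum_closureS S_indec S0).
  by apply: cvg_powR_invn d_gt0 bounds; rewrite invr_gt0.
Qed.
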